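(* In the situation below, for all $g,h\in G$ the matrix $Y(gh)^{-1}Y(g)Y(h)$ lies in $\iota(E^\times\cdot 1_A)$, so there is a unique $\alpha(g,h)\in E^\times$ with $Y(g)Y(h)=Y(gh)\iota(\alpha(g,h)1_A)$. Letting $G$ act on $E$ by $z^g:=z^{\sigma_g}$, the function $\alpha:G\times G\to E^\times$ is a factor set, i.e. $\alpha(gh,k)\alpha(g,h)^k=\alpha(g,hk)\alpha(h,k)$ for all $g,h,k\in G$.
   Context: $p$ prime; $F$ a sufficiently large finite field of characteristic $p$ (residue field of a $p$-modular system), $\mathcal{H}$ a group of automorphisms of the $p$-modular system acting on $F$ and inducing all automorphisms of $F$. $(G,N,\theta)_{\mathcal{H}}$ is a modular $\mathcal{H}$-triple ($N\trianglelefteq G$ finite, $\theta\in\mathrm{IBr}(N)$ with $G$-stable $\mathcal{H}$-orbit), $E=\mathbb{F}_p[\theta]$ the subfield of $F$ generated by the reductions of the values of $\theta$, $m=\theta(1)$, $s=[E:\mathbb{F}_p]$, $X:N\to\mathrm{GL}_m(E)$ a representation affording $\theta$. For $g\in G$, $\sigma_g\in\mathrm{Gal}(E/\mathbb{F}_p)$ is the unique element such that $n\mapsto X(gng^{-1})^{\sigma_g}$ affords $\theta$; $T_g\in\mathrm{GL}_m(E)$ satisfies $X(gng^{-1})^{\sigma_g}=T_gX(n)T_g^{-1}$; $A=\mathrm{M}_m(E)$ is a $G$-algebra via $x^g=T_g^{-1}x^{\sigma_g}T_g$. $\iota:A\to\mathrm{M}_{ms}(\mathbb{F}_p)$ is a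 unitary $\mathbb{F}_p$-algebra embedding and $Y:G\to\mathrm{GL}_{ms}(\mathbb{F}_p)$ satisfies: $Y(g)^{-1}\iota(x)Y(g)=\iota(x^g)$ ($x\in A,g\in G$); $Y(n)=\iota(X(n))$ ($n\in N$); $Y(gn)=Y(g)Y(n)$, $Y(ng)=Y(n)Y(g)$ ($n\in N,g\in G$). *)

From HB Require Import structures.
From mathcomp Require Import all_boot all_order all_algebra all_fingroup all_solvable all_field all_character.
Set Implicit Arguments. Unset Strict Implicit. Unset Printing Implicit Defensive.
Import GRing.Theory.
Local Open Scope ring_scope.

Definition galg_act (gT : finGroupType) (E : fieldType) (m : nat)
  (sigma : gT -> {rmorphism E -> E}) (T : gT -> 'M[E]_m) (g : gT) (x : 'M[E]_m)
  : 'M[E]_m :=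
  invmx (T g) *m map_mx (sigma g) x *m T g.

From HB Require Import structures.
From mathcomp Require Import all_boot all_order all_algebra all_fingroup all_solvable all_field all_character.

(* Conjugation by [Y g] induces the action [x |-> x^g] on [iota A], so
   [Y (g h)^-1 Y g Y h] centralizes [iota A].  As [|F_p|^(m s) = |E|^m], this
   centralizer is [iota (E 1)]: the rows fixed by the idempotent [iota e_00]
   are at most [|E|] in number (m-tuples of them embed into [F_p^(m s)] via
   [(v_i) |-> sum_i v_i iota e_0i]), yet they contain the [|E|] distinct rows
   [v0 iota c] for any nonzero fixed [v0].  Hence a centralizing matrix acts
   on the fixed rows as some [iota c], and the matrix units [iota e_ij]
   spread this to the whole space.  The cocycle identity compares the two
   ways of reducing [Y g Y h Y k], moving scalars across [Y k] by
   [iota c Y k = Y k iota (c^sigma_k)]. *)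

Set Implicit Arguments.
Unset Strict Implicit.
Unset Printing Implicit Defensive.

Import GRing.Theory.
Local Open Scope ring_scope.

Section ScalarCentralizer.

Variables (E : finFieldType) (F : finNzRingType) (m n : nat).
Variable iota : {rmorphism 'M[E]_m -> 'M[F]_n}.
Hypotheses (m_gt0 : (0 < m)%N) (iota_inj : injective iota).
Hypothesis card_rV_le : (#|F| ^ n <= #|E| ^ m)%N.

Let i0 : 'I_m := Ordinal m_gt0.
Let u (i j : 'I_m) := iota (delta_mx i j).

Lemma iota_mulmx (x y : 'M[E]_m) : iota (x *m y) = iota x *m iota y.
Proof. exact: rmorphM. Qed.

Lemma iota_scalar_inj : injective (fun a : E => iota a%:M).
Proof.
by move=> a b /iota_inj/matrixP/(_ i0 i0); rewrite !mxE eqxx !mulr1n.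
Qed.

Lemma iota_scalarC (c : E) (x : 'M[E]_m) :
  iota c%:M *m iota x = iota x *m iota c%:M.
Proof. by rewrite -!iota_mulmx scalar_mxC. Qed.

Lemma mulmx_iota_delta i j k l : u i j *m u k l = u i l *+ (j == k).
Proof. by rewrite -iota_mulmx mul_delta_mx_cond rmorphMn. Qed.

Lemma sum_iota_delta : \sum_i u i i = 1%:M.
Proof. rewrite /u -raddf_sum -mx1_sum_delta. exact: rmorph1. Qed.

Let R := [set v : 'rV[F]_n | v *m u i0 i0 == v].

Lemma card_fixed_rows_le : (#|R| <= #|E|)%N.
Proof.
rewrite -(leq_exp2r _ _ m_gt0) (leq_trans _ card_rV_le) //.
have -> : (#|F| ^ n = #|{: 'rV[F]_n}|)%N by rewrite card_mx mul1n.
rewrite -[m in (_ ^ m)%N]card_ord -card_ffun_on.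
pose glue (f : {ffun 'I_m -> 'rV[F]_n}) := \sum_i f i *m u i0 i.
apply: (@leq_card_in _ _ glue) => f g /ffun_onP fR /ffun_onP gR eq_fg.
have glueK (h : {ffun 'I_m -> 'rV[F]_n}) j :
    (forall i, h i \in R) -> glue h *m u j i0 = h j.
  move=> hR; rewrite mulmx_suml (bigD1 j) //= big1 ?addr0.
    rewrite -mulmxA mulmx_iota_delta eqxx mulr1n.
    by have := hR j; rewrite inE => /eqP.
  by move=> i ne_ij; rewrite -mulmxA mulmx_iota_delta (negPf ne_ij) mulmx0.
by apply/ffunP => j; rewrite -(glueK f) // -(glueK g) // eq_fg.
Qed.

Lemma iota_delta_neq0 : u i0 i0 != 0.
Proof.
rewrite /u -(raddf0 iota) (inj_eq iota_inj).
by apply/eqP => /matrixP/(_ i0 i0)/eqP; rewrite !mxE !eqxx oner_eq0.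
Qed.

Lemma exists_fixed_row_neq0 : exists2 v0, v0 \in R & v0 != 0.
Proof.
have [r nz_r] : exists r, row r (u i0 i0) != 0.
  apply/existsP; apply: contraR iota_delta_neq0 => /existsPn rows0.
  by apply/eqP/row_matrixP => r; rewrite row0; apply/eqP/negPn.
by exists (row r (u i0 i0)); rewrite // inE -row_mul mulmx_iota_delta eqxx mulr1n.
Qed.

Lemma mulmx_iota_scalar_inj (v : 'rV[F]_n) :
  v != 0 -> injective (fun c : E => v *m iota c%:M).
Proof.
move=> nz_v c d eq_cd; apply/eqP; apply: contraNT nz_v; rewrite -subr_eq0 => nz_cd.
have : v *m iota (c - d)%:M = 0.
  by rewrite (raddfB (@scalar_mx _ _)) raddfB mulmxBr eq_cd subrr.
move/(congr1 (mulmx^~ (iota (c - d)^-1%:M))).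
by rewrite mul0mx -mulmxA -iota_mulmx -scalar_mxM mulfV // rmorph1 mulmx1 => ->.
Qed.

Lemma fixed_rows_scalar_orbit v0 :
  v0 \in R -> v0 != 0 -> R = [set v0 *m iota c%:M | c : E].
Proof.
rewrite inE => /eqP v0P nz_v0; apply/esym/eqP.
rewrite eqEcard card_imset ?card_fixed_rows_le ?andbT.
  by apply/subsetP => _ /imsetP[c _ ->]; rewrite inE -mulmxA iota_scalarC mulmxA v0P.
exact: mulmx_iota_scalar_inj.
Qed.

Lemma centralizer_iota_scalar (Z : 'M[F]_n) :
  (forall x, Z *m iota x = iota x *m Z) -> exists c : E, Z = iota c%:M.
Proof.
move=> cZ; have [v0 v0R nz_v0] := exists_fixed_row_neq0.
have orbitR := fixed_rows_scalar_orbit v0R nz_v0.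
have /imsetP[c _ v0Z] : v0 *m Z \in [set v0 *m iota c%:M | c : E].
  by rewrite -orbitR inE -mulmxA cZ mulmxA; move: v0R; rewrite inE => /eqP->.
exists c.
have fixedZ w : w \in R -> w *m Z = w *m iota c%:M.
  rewrite orbitR => /imsetP[d _ ->].
  by rewrite -mulmxA -cZ mulmxA v0Z -!mulmxA iota_scalarC.
have colZ i : u i i0 *m Z = u i i0 *m iota c%:M.
  apply/row_matrixP => k; rewrite !row_mul fixedZ //.
  by rewrite inE -row_mul mulmx_iota_delta eqxx mulr1n.
rewrite -[Z]mul1mx -[iota _]mul1mx -sum_iota_delta !mulmx_suml.
apply: eq_bigr => i _.
have -> : u i i = u i i0 *m u i0 i by rewrite mulmx_iota_delta eqxx mulr1n.
by rewrite -!mulmxA -cZ !mulmxA colZ -!mulmxA iota_scalarC.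
Qed.

End ScalarCentralizer.

Lemma galg_act_scalar (gT : finGroupType) (E : fieldType) (m : nat)
    (sigma : gT -> {rmorphism E -> E}) (T : gT -> 'M[E]_m) g (a : E) :
  T g \in unitmx -> galg_act sigma T g a%:M = (sigma g a)%:M.
Proof. by move=> uTg; rewrite /galg_act map_scalar_mx scalar_mxC mulmxKV. Qed.

Section FactorSet.

Variables (E : finFieldType) (F : finComUnitRingType) (m n : nat).
Variables (gT : finGroupType) (G : {group gT}).
Variables (sigma : gT -> {rmorphism E -> E}) (T : gT -> 'M[E]_m).
Variable iota : {rmorphism 'M[E]_m -> 'M[F]_n}.
Variable Y : gT -> 'M[F]_n.

Local Notation act := (galg_act sigma T).

Hypotheses (m_gt0 : (0 < m)%N) (iota_inj : injective iota).
Hypothesis card_rV_le : (#|F| ^ n <= #|E| ^ m)%N.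
Hypothesis T_unit : forall g, g \in G -> T g \in unitmx.
Hypothesis act1 : forall x, act 1%g x = x.
Hypothesis actM : forall g h x, g \in G -> h \in G -> act (g * h)%g x = act h (act g x).
Hypothesis Y_unit : forall g, g \in G -> Y g \in unitmx.
Hypothesis Y_conj :
  forall g x, g \in G -> invmx (Y g) *m iota x *m Y g = iota (act g x).

Lemma galg_actK g y : g \in G -> act g (act g^-1%g y) = y.
Proof. by move=> gG; rewrite -actM ?groupV // mulVg act1. Qed.

Lemma iota_mulmx_Y g x : g \in G -> iota x *m Y g = Y g *m iota (act g x).
Proof. by move=> gG; rewrite -Y_conj // -!mulmxA mulKVmx ?Y_unit. Qed.

Definition factor_mx g h := invmx (Y (g * h)%g) *m Y g *m Y h.

Lemma factor_mx_central g h y : g \in G -> h \in G ->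
  factor_mx g h *m iota y = iota y *m factor_mx g h.
Proof.
move=> gG hG; have ghG := groupM gG hG.
rewrite -(galg_actK y ghG); set x := act _ y.
have invY_iota :
    invmx (Y (g * h)%g) *m iota x = iota (act (g * h)%g x) *m invmx (Y (g * h)%g).
  rewrite -[LHS](mulmxK (Y_unit ghG)) -(mulmxA (invmx _)) iota_mulmx_Y //.
  by rewrite mulKmx ?Y_unit.
rewrite /factor_mx !mulmxA -invY_iota actM // -!mulmxA -(iota_mulmx_Y _ hG).
by rewrite !mulmxA -(mulmxA (invmx _) (Y g)) -iota_mulmx_Y // !mulmxA.
Qed.

Definition factor_set g h : E :=
  odflt 0 [pick c : E | factor_mx g h == iota c%:M].

Lemma factor_mxE g h : g \in G -> h \in G -> factor_mx g h = iota (factor_set g h)%:M.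
Proof.
move=> gG hG; rewrite /factor_set; case: pickP => [c /eqP // | none].
have [c Zc] := centralizer_iota_scalar m_gt0 iota_inj card_rV_le
  (fun y => factor_mx_central y gG hG).
by move: (none c); rewrite Zc eqxx.
Qed.

Lemma mulmx_Y_factor g h : g \in G -> h \in G ->
  Y g *m Y h = Y (g * h)%g *m iota (factor_set g h)%:M.
Proof.
by move=> gG hG; rewrite -factor_mxE // /factor_mx -!mulmxA mulKVmx ?Y_unit ?groupM.
Qed.

Lemma factor_set_neq0 g h : g \in G -> h \in G -> factor_set g h != 0.
Proof.
move=> gG hG; apply/eqP => a0.
have : factor_mx g h \in unitmx by rewrite !unitmx_mul unitmx_inv !Y_unit ?groupM.
rewrite factor_mxE // a0 (raddf0 (@scalar_mx _ _)) raddf0 => /mulmxV.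
rewrite mul0mx => zero_one.
have /(iota_scalar_inj m_gt0 iota_inj)/eqP : iota 0%:M = iota 1%:M.
  by rewrite rmorph1 (raddf0 (@scalar_mx _ _)) raddf0 zero_one.
by rewrite eq_sym oner_eq0.
Qed.

Lemma mulmx_Y_scalar_inj g (a b : E) : g \in G ->
  Y g *m iota a%:M = Y g *m iota b%:M -> a = b.
Proof.
move=> gG /(congr1 (mulmx (invmx (Y g)))).
by rewrite !mulKmx ?Y_unit // => /(iota_scalar_inj m_gt0 iota_inj).
Qed.

Lemma factor_set_unique g h (a : E) : g \in G -> h \in G ->
  Y g *m Y h = Y (g * h)%g *m iota a%:M -> a = factor_set g h.
Proof.
move=> gG hG; rewrite mulmx_Y_factor // => /esym/mulmx_Y_scalar_inj; apply; exact: groupM.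
Qed.

Lemma factor_set_cocycle g h k : g \in G -> h \in G -> k \in G ->
  factor_set (g * h)%g k * sigma k (factor_set g h)
  = factor_set g (h * k)%g * factor_set h k.
Proof.
move=> gG hG kG; have ghkG : (g * h * k)%g \in G by rewrite !groupM.
apply: (mulmx_Y_scalar_inj ghkG); rewrite !scalar_mxM !iota_mulmx !mulmxA.
rewrite -(galg_act_scalar sigma _ (T_unit kG)) -mulmx_Y_factor ?groupM //.
rewrite -mulmxA -iota_mulmx_Y // mulmxA -mulmx_Y_factor //.
by rewrite -mulgA -mulmx_Y_factor ?groupM // -[RHS]mulmxA -mulmx_Y_factor // mulmxA.
Qed.

End FactorSet.

Theorem mainTheorem9
  (p : nat) (E : finFieldType) (s m : nat)
  (gT : finGroupType) (G N : {group gT})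
  (X : mx_representation E N m)
  (sigma : gT -> {rmorphism E -> E})
  (T : gT -> 'M[E]_m)
  (iota : {rmorphism 'M[E]_m -> 'M['F_p]_(m * s)})
  (Y : gT -> 'M['F_p]_(m * s)) :
  prime p -> p \in [pchar E] -> #|E| = (p ^ s)%N ->
  (N <| G)%g ->
  mx_absolutely_irreducible X ->
  (* sigma_g, T_g : X(g n g^-1)^{sigma_g} = T_g X(n) T_g^{-1} *)
  (forall g, g \in G -> T g \in unitmx) ->
  (forall g n, g \in G -> n \in N ->
     map_mx (sigma g) (X (g * n * g^-1)%g) = T g *m X n *m invmx (T g)) ->
  (* sigma_g is the unique such Galois automorphism *)
  (forall g (tau : {rmorphism E -> E}), g \in G ->
     (exists2 U : 'M[E]_m, U \in unitmx &
        forall n, n \in N -> map_mx tau (X (g * n * g^-1)%g) = U *m X n *m invmx U) ->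
     tau =1 sigma g) ->
  (* A is a G-algebra via x^g = T_g^{-1} x^{sigma_g} T_g *)
  (forall x, galg_act sigma T 1%g x = x) ->
  (forall g h x, g \in G -> h \in G ->
     galg_act sigma T (g * h)%g x = galg_act sigma T h (galg_act sigma T g x)) ->
  (* iota is a unitary F_p-algebra embedding *)
  injective iota ->
  (* properties of Y *)
  (forall g, g \in G -> Y g \in unitmx) ->
  (forall g x, g \in G -> invmx (Y g) *m iota x *m Y g = iota (galg_act sigma T g x)) ->
  (forall n, n \in N -> Y n = iota (X n)) ->
  (forall g n, g \in G -> n \in N -> Y (g * n)%g = Y g *m Y n) ->
  (forall g n, g \in G -> n \in N -> Y (n * g)%g = Y n *m Y g) ->
  exists alpha : gT -> gT -> E,
    [/\ (forall g h, g \in G -> h \in G ->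
           alpha g h != 0 /\
           invmx (Y (g * h)%g) *m Y g *m Y h = iota ((alpha g h)%:M)),
        (forall g h, g \in G -> h \in G ->
           Y g *m Y h = Y (g * h)%g *m iota ((alpha g h)%:M)),
        (forall g h (a : E), g \in G -> h \in G ->
           Y g *m Y h = Y (g * h)%g *m iota (a%:M) -> a = alpha g h) &
        (forall g h k, g \in G -> h \in G -> k \in G ->
           alpha (g * h)%g k * sigma k (alpha g h)
           = alpha g (h * k)%g * alpha h k)].
Proof.
move=> pr_p _ cardE _ /andP[m_gt0 _] T_unit _ _ act1 actM iota_inj Y_unit Y_conj _ _ _.
have card_rV_le : (#|'F_p| ^ (m * s) <= #|E| ^ m)%N.
  by rewrite card_Fp // cardE -expnM mulnC.
exists (factor_set iota Y); split.
- move=> g h gG hG; split.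
    exact: (factor_set_neq0 m_gt0 iota_inj card_rV_le act1 actM Y_unit Y_conj gG hG).
  exact: (factor_mxE m_gt0 iota_inj card_rV_le act1 actM Y_unit Y_conj gG hG).
- exact: (mulmx_Y_factor m_gt0 iota_inj card_rV_le act1 actM Y_unit Y_conj).
- exact: (factor_set_unique m_gt0 iota_inj card_rV_le act1 actM Y_unit Y_conj).
- exact: (factor_set_cocycle m_gt0 iota_inj card_rV_le T_unit act1 actM Y_unit Y_conj).
Qed.
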